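(* Let $k\ge1$, $G=(V,E)$ an inductively $k$-independent graph with $k$-independence ordering $v_1,\dots,v_n$, $f:2^V\to\mathbb{R}_{\ge0}$ monotone submodular with $f(\emptyset)=0$, and $\beta>0$. Run algorithm PD-MON (described in the context) and let $\mu=f(S_{\mathrm{end}})$, $y_i=(1+\beta)w_i$ for all $i$, and $z_i=0$ if $v_i\in S_{\mathrm{end}}$ and $z_i=f_{S_i}(v_i)$ otherwise, where $S_i$ is the stack just before $v_i$ is processed. Then $(\mu,y,z)$ is a feasible solution of the linear program with constraints \[ \mu+\sum_{v_i\in L} z_i\ge f(L)\ \ \text{for all } L\subseteq V,\qquad y_i+\sum_{v_j\in B_i}y_j\ge z_i\ \text{ and } y_i\ge0\ \ \text{for all } i\in[n], \] where $B_i=N(v_i)\cap\{v_1,\dots,v_{i-1}\}$ ($\mu$ and $z$ are unrestricted in sign).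
   Context: $N(v)$ is the neighbourhood of $v$ (excluding $v$); $G$ is inductively $k$-independent with $k$-independence ordering $v_1,\dots,v_n$ if for every $i$, $G[N(v_i)\cap\{v_i,\dots,v_n\}]$ has no independent set of size more than $k$. For $S\subseteq V$, $f_S(v)=f(S\cup\{v\})-f(S)$. Algorithm PD-MON (parameter $\beta>0$). Phase 1: start with $S=\emptyset$ (a stack) and $w_1=\dots=w_n=0$. For $i=1,\dots,n$: let $C_i=N(v_i)\cap S$ for the current $S$; if $f_S(v_i)>(1+\beta)\sum_{v_j\in C_i}w_j$, set $w_i=f_S(v_i)-\sum_{v_j\in C_i}w_j$ (with $S$ the set before insertion) and push $v_i$ onto $S$; otherwise leave $w_i=0$. Let $S_{\mathrm{end}}$ be $S$ at the end of Phase 1. Phase 2: with $S_{\mathrm{out}}=\emptyset$, pop vertices of $S_{\mathrm{end}}$ in reverse insertion order, adding a popped $v$ to $S_{\mathrm{out}}$ whenever $S_{\mathrm{out}}\cup\{v\}$ is independent. Output $S_{\mathrm{out}}$. *)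

From mathcomp Require Import all_boot all_order all_algebra.
Set Implicit Arguments. Unset Strict Implicit. Unset Printing Implicit Defensive.
Import Order.TTheory GRing.Theory Num.Theory.
Local Open Scope ring_scope.

(* Vertices are 'I_n; the k-independence ordering v_1..v_n is the index order
   0 < 1 < ... < n-1.  The graph is a symmetric irreflexive relation e. *)

Definition simple_graph (n : nat) (e : rel 'I_n) : Prop :=
  (forall x y, e x y = e y x) /\ (forall x, ~~ e x x).

Definition nbhd (n : nat) (e : rel 'I_n) (v : 'I_n) : {set 'I_n} :=
  [set u | e v u].

Definition independent (n : nat) (e : rel 'I_n) (I : {set 'I_n}) : bool :=
  [forall x in I, forall y in I, ~~ e x y].

Definition inductively_k_independent (n : nat) (e : rel 'I_n) (k : nat) : Prop :=
  forall (i : 'I_n) (I : {set 'I_n}),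
    I \subset nbhd e i :&: [set u : 'I_n | i <= u]%N ->
    independent e I -> (#|I| <= k)%N.

Definition monotone_setfun (n : nat) (R : realFieldType) (f : {set 'I_n} -> R) :=
  forall A B : {set 'I_n}, A \subset B -> f A <= f B.

Definition submodular (n : nat) (R : realFieldType) (f : {set 'I_n} -> R) :=
  forall A B : {set 'I_n}, f (A :|: B) + f (A :&: B) <= f A + f B.

Definition marg (n : nat) (R : realFieldType) (f : {set 'I_n} -> R)
  (S : {set 'I_n}) (v : 'I_n) : R := f (S :|: [set v]) - f S.

(* Since insertions happen in index order, the stack S is represented by the set
   of its elements (its insertion order is the index order). *)
Definition pd_step (n : nat) (R : realFieldType) (e : rel 'I_n)
  (f : {set 'I_n} -> R) (beta : R)
  (st : {set 'I_n} * ('I_n -> R)) (i : 'I_n) : {set 'I_n} * ('I_n -> R) :=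
  let S := st.1 in let w := st.2 in
  let sumC := \sum_(j in nbhd e i :&: S) w j in
  let g := marg f S i in
  if g > (1 + beta) * sumC then
    (S :|: [set i], fun j => if j == i then g - sumC else w j)
  else (S, w).

(* State after processing the first m vertices v_1..v_m (indices 0..m-1). *)
Fixpoint pd_state (n : nat) (R : realFieldType) (e : rel 'I_n)
  (f : {set 'I_n} -> R) (beta : R) (m : nat) : {set 'I_n} * ('I_n -> R) :=
  match m with
  | 0 => (set0, fun _ => 0)
  | m'.+1 =>
      let st := pd_state e f beta m' in
      match @insub nat (fun x => (x < n)%N) 'I_n m' with
      | Some i => pd_step e f beta st i
      | None => st
      end
  end.

Definition S_before (n : nat) (R : realFieldType) (e : rel 'I_n)
  (f : {set 'I_n} -> R) (beta : R) (i : 'I_n) : {set 'I_n} :=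
  (pd_state e f beta i).1.

Definition S_end (n : nat) (R : realFieldType) (e : rel 'I_n)
  (f : {set 'I_n} -> R) (beta : R) : {set 'I_n} :=
  (pd_state e f beta n).1.

Definition pd_w (n : nat) (R : realFieldType) (e : rel 'I_n)
  (f : {set 'I_n} -> R) (beta : R) : 'I_n -> R :=
  (pd_state e f beta n).2.

(* Phase 2: pop S_end in reverse insertion (= decreasing index) order, greedily
   keeping an independent set.  (Not needed by lemma2, given for completeness.) *)
Definition pd_out (n : nat) (R : realFieldType) (e : rel 'I_n)
  (f : {set 'I_n} -> R) (beta : R) : {set 'I_n} :=
  foldl (fun (Sout : {set 'I_n}) v =>
           if independent e (v |: Sout) then v |: Sout else Sout)
        set0 (rev [seq v <- enum 'I_n | v \in S_end e f beta]).

(* The covering constraints come from submodularity: f L <= f S_end plus the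
   marginals f_{S_end}(v) of the vertices of L outside S_end, and each such
   marginal is at most z_i = f_{S_i}(v_i) because S_i is a subset of S_end.
   The dual constraint is nontrivial only for a rejected v_i, whose rejection
   test reads f_{S_i}(v_i) <= (1 + beta) * sum_{C_i} w_j; here C_i is part of
   B_i since the stack only holds earlier vertices, and a weight w_j never
   changes after v_j has been processed. *)

From mathcomp Require Import all_boot all_order all_algebra.
From mathcomp.algebra_tactics Require Import lra.
Set Implicit Arguments. Unset Strict Implicit. Unset Printing Implicit Defensive.
Import Order.TTheory GRing.Theory Num.Theory.
Local Open Scope ring_scope.

Section SubmodularMarginals.

Variables (R : realFieldType) (n : nat) (f : {set 'I_n} -> R).
Hypothesis f_mono : monotone_setfun f.
Hypothesis f_submod : submodular f.

Lemma marg_antimono (X Y : {set 'I_n}) i :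
  X \subset Y -> marg f Y i <= marg f X i.
Proof.
move=> XY; have := f_submod (X :|: [set i]) Y.
rewrite setUAC (setUidPr XY).
have : f X <= f ((X :|: [set i]) :&: Y).
  by apply: f_mono; rewrite subsetI subsetUl XY.
rewrite /marg; lra.
Qed.

Lemma le_setU_marg_sum (A B : {set 'I_n}) :
  f (A :|: B) <= f A + \sum_(i in B) marg f A i.
Proof.
rewrite -[B in A :|: B]set_enum -big_enum /=.
elim: (enum B) => [|x s IH].
  by rewrite big_nil addr0 (_ : [set x in [::]] = set0) ?setU0.
have -> : A :|: [set y in x :: s] = (A :|: [set y in s]) :|: [set x].
  by apply/setP => y; rewrite !inE orbA orbAC.
have := marg_antimono x (subsetUl A [set y in s]).
by rewrite big_cons; move: IH; rewrite /marg => ? ?; lra.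
Qed.

End SubmodularMarginals.

Section PhaseOne.

Variables (R : realFieldType) (n : nat) (e : rel 'I_n)
  (f : {set 'I_n} -> R) (beta : R).

Local Notation st m := (pd_state e f beta m).

Lemma pd_state_subsetS m : (st m).1 \subset (st m.+1).1.
Proof.
rewrite /=; case: insubP => [i _ _|_] //=; rewrite /pd_step.
by case: ifP => //= _; rewrite subsetUl.
Qed.

Lemma pd_state_subset m m' : (m <= m')%N -> (st m).1 \subset (st m').1.
Proof.
elim: m' => [|m' IH]; first by rewrite leqn0 => /eqP ->.
rewrite leq_eqVlt => /orP[/eqP -> // | /IH sub].
exact: subset_trans sub (pd_state_subsetS m').
Qed.

Lemma pd_state_weightS m (j : 'I_n) :
  (j < m)%N -> (st m.+1).2 j = (st m).2 j.
Proof.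
move=> jm /=; case: insubP => [i _ im|_] //=; rewrite /pd_step.
case: ifP => //= _; case: eqP => // ji.
by move: jm; rewrite ji im ltnn.
Qed.

Lemma pd_state_weight m m' (j : 'I_n) :
  (j < m)%N -> (m <= m')%N -> (st m').2 j = (st m).2 j.
Proof.
move=> jm; elim: m' => [|m' IH]; first by rewrite leqn0 => /eqP ->.
rewrite leq_eqVlt => /orP[/eqP -> // | mm'].
by rewrite pd_state_weightS ?IH // (leq_trans jm).
Qed.

Lemma pd_state_lt m (j : 'I_n) : j \in (st m).1 -> (j < m)%N.
Proof.
elim: m => [|m IH]; first by rewrite inE.
rewrite /=; case: insubP => [i _ im|_] /=; last by move/IH/ltnW.
rewrite /pd_step; case: ifP => /= _; last by move/IH/ltnW.
by rewrite !inE => /orP[/IH/ltnW // | /eqP ->]; rewrite im.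
Qed.

Hypothesis beta_ge0 : 0 <= beta.

Lemma pd_state_weight_ge0 m (j : 'I_n) : 0 <= (st m).2 j.
Proof.
elim: m j => [|m IH] j //=; case: insubP => [i _ _|_] //=; rewrite /pd_step.
case: ifP => //= accept; case: (j == i) => //.
set s := \sum_(_ in _) _ in accept *.
have s_ge0 : 0 <= s by apply: sumr_ge0.
have bs_ge0 : 0 <= beta * s by rewrite mulr_ge0.
by move: accept; rewrite mulrDl mul1r => ?; lra.
Qed.

Lemma pd_rejected (i : 'I_n) : i \notin S_end e f beta ->
  marg f (S_before e f beta i) i <=
    (1 + beta) * \sum_(j in nbhd e i :&: S_before e f beta i) (st i).2 j.
Proof.
move=> iSend; have : i \notin (st i.+1).1.
  by apply: contra iSend; apply/subsetP/pd_state_subset.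
rewrite /=; case: insubP => [u _ ui|]; last by rewrite ltn_ord.
rewrite (_ : u = i); last exact: val_inj.
rewrite /pd_step; case: ifP => /= [_|reject _]; first by rewrite !inE eqxx orbT.
by rewrite leNgt reject.
Qed.

End PhaseOne.

Section Feasibility.

Variables (R : realFieldType) (n : nat) (e : rel 'I_n)
  (f : {set 'I_n} -> R) (beta : R).
Hypotheses (f_mono : monotone_setfun f) (f_submod : submodular f).
Hypothesis beta_ge0 : 0 <= beta.

Local Notation Send := (S_end e f beta).
Local Notation y i := ((1 + beta) * pd_w e f beta i).
Local Notation z i := (if i \in Send then 0 else marg f (S_before e f beta i) i).

Lemma pd_dual_ge0 i : 0 <= y i.
Proof.
by apply: mulr_ge0; [rewrite addr_ge0 | exact: pd_state_weight_ge0].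
Qed.

Lemma pd_cover_feasible (L : {set 'I_n}) : f L <= f Send + \sum_(i in L) z i.
Proof.
have fL : f L <= f (Send :|: (L :\: Send)).
  by apply: f_mono; rewrite setDE setUIr setUCr setIT subsetUr.
apply: (le_trans fL); apply: (le_trans (le_setU_marg_sum f_mono f_submod _ _)).
have -> : \sum_(i in L) z i = \sum_(i in L :\: Send) marg f (S_before e f beta i) i.
  rewrite (bigID (mem Send)) /= big1 ?add0r => [|i /andP[_ ->]] //.
  apply: eq_big => [i | i /andP[_ /negbTE ->]] //.
  by rewrite !inE andbC.
rewrite lerD2l; apply: ler_sum => i _.
by apply: marg_antimono => //; apply/pd_state_subset/ltnW.
Qed.

Lemma pd_dual_feasible i : z i <= y i + \sum_(j in nbhd e i | (j < i)%N) y j.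
Proof.
have sum_ge0 : 0 <= \sum_(j in nbhd e i | (j < i)%N) y j.
  by apply: sumr_ge0 => j _; apply: pd_dual_ge0.
case: ifPn => iS; first by rewrite addr_ge0 ?pd_dual_ge0.
apply: (le_trans (pd_rejected iS)); rewrite -[X in X <= _]add0r.
apply: lerD; first exact: pd_dual_ge0.
rewrite mulr_sumr [X in X <= _]big_mkcond [X in _ <= X]big_mkcond /=.
apply: ler_sum => j _; rewrite inE.
case: (j \in nbhd e i) => //=.
case jS: (j \in S_before e f beta i); last by case: ifP => // _; apply: pd_dual_ge0.
have ji := pd_state_lt jS.
by rewrite ji /pd_w (pd_state_weight e f beta ji (ltnW (ltn_ord i))).
Qed.

End Feasibility.

Theorem lemma2 (R : realFieldType) (n k : nat) (e : rel 'I_n)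
  (f : {set 'I_n} -> R) (beta : R) :
  (1 <= k)%N ->
  simple_graph e ->
  inductively_k_independent e k ->
  (forall A, 0 <= f A) ->
  monotone_setfun f ->
  submodular f ->
  f set0 = 0 ->
  0 < beta ->
  let Send := S_end e f beta in
  let mu := f Send in
  let y := fun i => (1 + beta) * pd_w e f beta i in
  let z := fun i => if i \in Send then 0 else marg f (S_before e f beta i) i in
  (forall L : {set 'I_n}, f L <= mu + \sum_(i in L) z i) /\
  (forall i : 'I_n, z i <= y i + \sum_(j in nbhd e i | (j < i)%N) y j) /\
  (forall i : 'I_n, 0 <= y i).
Proof.
move=> _ _ _ _ f_mono f_submod _ /ltW beta_ge0 Send mu y z.
split; first exact: pd_cover_feasible.
split; first exact: pd_dual_feasible.
exact: pd_dual_ge0.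
Qed.
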